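(* Let $A=\{-1,+1\}$, $\sigma\in(0,1)$, and let $P$ be a kernel on $A$ whose probabilistic skeleton $(\tau^\sigma,p)$ with respect to $\tau^\sigma$ satisfies $\inf_{v\in\tau^\sigma}p(1|v)>\sigma$. Then $(\tau^\sigma,p)$ is good, and its good coalescence time $\bar\theta[0]$ has exponential tail.
   Context: A past is $\underline a=\ldots a_{-2}a_{-1}\in A^{-\mathbb N}$; concatenation puts the older part on the left ($\underline z\,v$ is the past ending with the finite string $v$, preceded by $\underline z$). A kernel is $P:A\times A^{-\mathbb N}\to[0,1]$ with $\sum_aP(a|\underline a)=1$; $\alpha(a):=\inf_{\underline z}P(a|\underline z)$, $\alpha_{-1}:=\alpha(-1)+\alpha(1)$. For a past $\underline a$, $T_\sigma(\underline a):=\inf\{k\ge1:\frac1k\sum_{i=1}^k\mathbf 1\{a_{-i}=1\}\ge\sigma\}$ ($=+\infty$ if the set is empty). $\tau^\sigma$ is the set consisting of the finite strings $a_{-T_\sigma(\underline a)}^{-1}$ for pasts with $T_\sigma(\underline a)<\infty$ together with the pasts $\underline a$ with $T_\sigma(\underline a)=\infty$; it is a context tree: every past has exactly one element of $\tau^\sigma$ as suffix, denoted $c_{\tau^\sigma}(\underline a)$. The probabilistic skeleton is $(\tau^\sigma,p)$ with $p(a|v):=\inf_{\underline z}P(a|\underline z v)$ for finite $v\in\tau^\sigma$ and $p(a|v):=P(a|v)$ for infinite $v$. $\mathbf U=(U_i)_{i\in\mathbb Z}$ i.i.d. uniform on $[0,1)$. With $A$ enumerated in a fixed order $a^{(1)},a^{(2)}$,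 $Y_i:=a^{(1)}$ if $U_i<\alpha(a^{(1)})$, $Y_i:=a^{(2)}$ if $\alpha(a^{(1)})\le U_i<\alpha_{-1}$, $Y_i:=\star$ if $U_i\ge\alpha_{-1}$. For $\mathbf a\in A^{\mathbb Z}$, $Y_i(\mathbf a):=Y_i$ if $Y_i\in A$, else $a_i$. $c^n_\tau:=\sup_{\mathbf a}|c_{\tau^\sigma}(\ldots Y_{n-1}(\mathbf a)Y_n(\mathbf a))|$. $\bar\theta[m]:=\sup\{i\le m:\forall j\in\{i,\dots,m\},\ Y_j\in A\text{ or }c^j_\tau\le j-i\}$ (sup of empty set $=-\infty$) is the good coalescence time; $(\tau^\sigma,p)$ is good if $\mathbb E|\bar\theta[0]|<\infty$. Exponential tail: $\mathbb P(|W|\ge n)\le Dd^n$ for some $D>0$, $0<d<1$. *)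

From HB Require Import structures.
From mathcomp Require Import all_boot all_order all_algebra.
From mathcomp Require Import all_classical all_reals all_analysis measurable_realfun.
Set Implicit Arguments. Unset Strict Implicit. Unset Printing Implicit Defensive.
Import Order.TTheory GRing.Theory Num.Theory.
Import numFieldNormedType.Exports.
Local Open Scope classical_set_scope.
Local Open Scope ring_scope.

Inductive sgn := Minus | Plus.

Definition other (a : sgn) : sgn := if a is Plus then Minus else Plus.

(** Pasts: a past  ... a_{-2} a_{-1}  is represented as  b : nat -> sgn
    with  b k = a_{-(k+1)}  (b 0 is the most recent symbol). *)
Definition past := nat -> sgn.

(** A finite string v = a_{-n} ... a_{-1} is represented as a seq listed
    from the most recent symbol backwards: [:: a_{-1}; a_{-2}; ...; a_{-n}].
    [cat_past z v] is the past  z v  (z older, v the most recent part). *)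
Definition cat_past (z : past) (v : seq sgn) : past :=
  fun k => if (k < size v)%N then nth Plus v k else z (k - size v)%N.

Section Defs.
Variable R : realType.

Definition is_kernel (P : sgn -> past -> R) : Prop :=
  (forall a z, 0 <= P a z <= 1) /\ (forall z, P Minus z + P Plus z = 1).

Definition alpha (P : sgn -> past -> R) (a : sgn) : R := inf (range (P a)).
Definition alpha_m1 (P : sgn -> past -> R) : R := alpha P Minus + alpha P Plus.

Definition ind_plus (s : sgn) : R := if s is Plus then 1 else 0.

Definition Tsig (sigma : R) (b : past) : \bar R :=
  ereal_inf [set (k%:R)%:E | k in
     [set k : nat | (0 < k)%N /\ sigma <= (\sum_(i < k) ind_plus (b i)) / k%:R]].

(** Elements of the context tree tau^sigma: finite strings or infinite pasts. *)
Inductive ctx := Fin of seq sgn | Inf of past.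

Definition in_tau (sigma : R) (v : ctx) : Prop :=
  match v with
  | Fin w => exists b : past, Tsig sigma b = ((size w)%:R)%:E /\ w = mkseq b (size w)
  | Inf b => Tsig sigma b = +oo%E
  end.

Definition pskel (P : sgn -> past -> R) (a : sgn) (v : ctx) : R :=
  match v with
  | Fin w => inf (range (fun z => P a (cat_past z w)))
  | Inf b => P a b
  end.

Variables (d : measure_display) (Omega : measurableType d).

(** Y_i in A + {star} (None = star), with a1 the first element of A *)
Definition Yv (P : sgn -> past -> R) (a1 : sgn) (U : int -> Omega -> R)
    (i : int) (w : Omega) : option sgn :=
  if U i w < alpha P a1 then Some a1
  else if U i w < alpha_m1 P then Some (other a1)
  else None.

Definition Ya P a1 U (i : int) w (a : int -> sgn) : sgn :=
  if Yv P a1 U i w is Some s then s else a i.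

Definition pastY P a1 U (n : int) w (a : int -> sgn) : past :=
  fun k => Ya P a1 U (n - k%:Z) w a.

(** c^n_tau = sup_a |c_{tau^sigma}(... Y_{n-1}(a) Y_n(a))|; the length of the
    context c_{tau^sigma}(b) is T_sigma(b) (+oo for infinite contexts). *)
Definition cn P a1 U (sigma : R) (n : int) w : \bar R :=
  ereal_sup [set Tsig sigma (pastY P a1 U n w a) | a in [set: int -> sgn]].

(** good coalescence time theta[m] (as an extended real; -oo for sup of empty set) *)
Definition theta P a1 U sigma (m : int) (w : Omega) : \bar R :=
  ereal_sup [set ((i%:~R : R))%:E | i in
    [set i : int | (i <= m)%R /\
       forall j : int, (i <= j)%R -> (j <= m)%R ->
         Yv P a1 U j w <> None \/ (cn P a1 U sigma j w <= ((j - i)%:~R : R)%:E)%E]].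

Definition iid_uniform (Pr : probability Omega R) (U : int -> Omega -> R) : Prop :=
  (forall i, measurable_fun setT (U i)) /\
  (forall i (B : set R), measurable B ->
      Pr (U i @^-1` B) = lebesgue_measure (B `&` `[0%R, 1%R[)) /\
  (forall (s : seq int) (B : int -> set R), uniq s -> (forall i, measurable (B i)) ->
      Pr (\big[setI/setT]_(i <- s) (U i @^-1` B i))
      = (\prod_(i <- s) Pr (U i @^-1` B i))%E).

End Defs.

(* Read Y_0, Y_{-1}, Y_{-2}, ... backwards from time 0 and run the reflected walk
   h <- max (h - (1 - sigma)) 0 after a plus, h <- h + sigma otherwise (a star
   counts as a minus).  The walk dominates the plus-deficit of every final window,
   so if it sits at 0 at step k while Y_{-k} is determined, then whatever the
   undetermined symbols are, every time -k <= j <= 0 either has Y_j determined or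
   sees a context of length at most j + k: -k is a coalescence time and
   |theta[0]| <= k.  Every past has a context in tau^sigma, so P(Y = +) >=
   alpha(+) > sigma and the walk drifts down.  Hence the expected potential
   exp (rate * h), replaced at height 0 by a suitable constant, restricted to the
   paths without coalescence contracts by a factor rho < 1 per step: the
   probability of no coalescence before step n, and so of |theta[0]| >= n, is at
   most rho^n.  Integrability follows by summing this tail. *)

From HB Require Import structures.
From mathcomp Require Import all_boot all_order all_algebra.
From mathcomp Require Import all_classical all_reals all_analysis measurable_realfun.
From mathcomp Require Import ring lra zify.
Set Implicit Arguments. Unset Strict Implicit. Unset Printing Implicit Defensive.
Import Order.TTheory GRing.Theory Num.Theory.
Import numFieldNormedType.Exports.
Local Open Scope classical_set_scope.
Local Open Scope ring_scope.

Definition bool_of_sgn (s : sgn) : bool := if s is Plus then true else false.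
Definition sgn_of_bool (b : bool) : sgn := if b then Plus else Minus.

Lemma bool_of_sgnK : cancel bool_of_sgn sgn_of_bool.
Proof. by case. Qed.

HB.instance Definition _ := Finite.copy sgn (can_type bool_of_sgnK).

Section ReflectedWalk.
Variables (R : realType) (sigma : R).

Definition plus_mass (c : option sgn) : R := if c is Some Plus then 1 else 0.

Definition walk_step (h : R) (c : option sgn) : R :=
  if c is Some Plus then Num.max (h - (1 - sigma)) 0 else h + sigma.

Definition height (y : seq (option sgn)) : R := foldl walk_step 0 y.

Definition coalesces_at (y : seq (option sgn)) (k : nat) : bool :=
  (height (take k y) == 0) && (nth None y k != None).

Definition coalesced (y : seq (option sgn)) : bool :=
  has (coalesces_at y) (iota 0 (size y)).

Lemma height_rcons y c : height (rcons y c) = walk_step (height y) c.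
Proof. by rewrite /height foldl_rcons. Qed.

Lemma walk_step_lb h c : h + sigma - plus_mass c <= walk_step h c.
Proof. by case: c => [[]|] /=; rewrite ?subr0 // le_max; apply/orP; left; lra. Qed.

Lemma coalesced_rcons y c :
  coalesced (rcons y c) = coalesced y || ((height y == 0) && (c != None)).
Proof.
rewrite /coalesced size_rcons -addn1 iotaD has_cat add0n has_seq1.
congr (_ || _); last by rewrite /coalesces_at -cats1 take_size_cat // nth_cat ltnn subnn.
apply: eq_in_has => k; rewrite mem_iota add0n => /andP [_ ky].
by rewrite /coalesces_at -cats1 takel_cat ?nth_cat ?ky // ltnW.
Qed.

Hypothesis sigma_ge0 : 0 <= sigma.

Lemma height_ge0 y : 0 <= height y.
Proof.
elim/last_ind: y => [|y c IH]; first by rewrite /height.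
rewrite height_rcons /walk_step; case: c => [[]|]; rewrite ?le_max ?lexx ?orbT //;
  exact: addr_ge0.
Qed.

Lemma height_window y t : (t <= size y)%N ->
  sigma * (size y - t)%:R - \sum_(t <= i < size y) plus_mass (nth None y i) <= height y.
Proof.
elim/last_ind: y t => [|y c IH] t.
  by rewrite leqn0 => /eqP ->; rewrite big_geq // subnn mulr0 subr0 /height.
rewrite size_rcons leq_eqVlt => /orP [/eqP ->|]; first
  by rewrite subnn big_geq // mulr0 subr0 height_ge0.
rewrite ltnS => ty; rewrite height_rcons; apply: le_trans (walk_step_lb _ _).
rewrite big_nat_recr //= nth_rcons ltnn eqxx subSn // mulrS.
rewrite (eq_big_nat _ _ (F2 := fun i => plus_mass (nth None y i))); last first.
  by move=> i /andP [_ iy]; rewrite nth_rcons iy.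
have := IH t ty; lra.
Qed.

End ReflectedWalk.

Definition letters : seq (option sgn) := [:: None; Some Minus; Some Plus].

Fixpoint words (n : nat) : seq (seq (option sgn)) :=
  if n is n'.+1 then [seq rcons y c | y <- words n', c <- letters] else [:: [::]].

Lemma size_words n y : y \in words n -> size y = n.
Proof.
elim: n y => [|n IH] y; first by rewrite inE => /eqP ->.
by move=> /allpairsP [[z c] [/= /IH <- _ ->]]; rewrite size_rcons.
Qed.

Lemma mem_words y : y \in words (size y).
Proof.
elim/last_ind: y => [|y c IH]; first by rewrite inE.
by rewrite size_rcons; apply: allpairs_f => //; case: c => [[]|].
Qed.

Section Potential.
Variables (R : realType) (sigma p m : R).
Hypotheses (sigma_gt0 : 0 < sigma) (sigma_lt1 : sigma < 1) (sigma_lt_p : sigma < p)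
  (m_ge0 : 0 <= m) (pm_le1 : p + m <= 1).

(* [lra] and [nra] ignore section hypotheses: [params] copies them into the goal context. *)
Local Ltac params := have ? := sigma_gt0; have ? := sigma_lt1; have ? := sigma_lt_p;
  have ? := m_ge0; have ? := pm_le1.

Definition letter_weight (c : option sgn) : R :=
  match c with Some Plus => p | Some Minus => m | None => 1 - p - m end.

Definition word_weight (y : seq (option sgn)) : R := \prod_(c <- y) letter_weight c.

Lemma letter_weight_ge0 c : 0 <= letter_weight c.
Proof. by params; case: c => [[]|] /=; lra. Qed.

Lemma word_weight_ge0 y : 0 <= word_weight y.
Proof. by apply: prodr_ge0 => c _; exact: letter_weight_ge0. Qed.

Lemma word_weight_rcons y c : word_weight (rcons y c) = word_weight y * letter_weight c.
Proof. by rewrite /word_weight big_rcons. Qed.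

Definition rate : R := Num.min (p * (p + m)) (p - sigma) / 2.
Definition up_factor : R := expR (rate * sigma).
Definition down_factor : R := expR (- (rate * (1 - sigma))).

(* Any value strictly between the two bounds of [zero_gap] works. *)
Definition base_level : R :=
  ((1 - p - m) * up_factor + (1 - (1 - p) * up_factor) / p) / 2.

(* Bounds for the one-step growth of the potential at height [0], and at
   positive heights below and above [1 - sigma]. *)
Definition contraction : R :=
  Num.max ((1 - p - m) * up_factor / base_level)
    (Num.max (p * base_level + (1 - p) * up_factor) (p * down_factor + (1 - p) * up_factor)).

Definition level (h : R) : R := if h <= 0 then base_level else expR (rate * h).

Definition potential (y : seq (option sgn)) : R :=
  if coalesced sigma y then 0 else word_weight y * level (height sigma y).

Lemma rate_facts : [/\ 0 < rate, rate < p * (p + m) & rate < p - sigma].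
Proof.
params.
have pp_gt0 : 0 < p * (p + m) by apply: mulr_gt0; lra.
rewrite /rate; set mi := Num.min _ _.
have : 0 < mi by rewrite lt_min pp_gt0 /=; lra.
have : mi <= p * (p + m) by rewrite ge_min lexx.
have : mi <= p - sigma by rewrite ge_min lexx orbT.
by split; lra.
Qed.

Lemma up_factor_facts : 1 <= up_factor /\ up_factor * (1 - rate * sigma) <= 1.
Proof.
params.
have [rate_gt0 _ _] := rate_facts.
have up_gt0 : 0 < up_factor by apply: expR_gt0.
split; first by have := expR_ge1Dx (rate * sigma); rewrite -/up_factor; nra.
have := expR_ge1Dx (- (rate * sigma)); rewrite expRN -/up_factor => inv_ge.
have := ler_wpM2r (ltW up_gt0) inv_ge; rewrite mulVf ?gt_eqF //; lra.
Qed.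

Lemma down_factor_facts : down_factor * (1 + rate * (1 - sigma)) <= 1.
Proof.
have e_gt0 := expR_gt0 (rate * (1 - sigma)).
rewrite /down_factor expRN -[leRHS](mulVf (lt0r_neq0 e_gt0)).
by apply: ler_wpM2l; [rewrite invr_ge0 ltW | exact: expR_ge1Dx].
Qed.

Lemma zero_gap : (1 - p - m) * up_factor < (1 - (1 - p) * up_factor) / p.
Proof.
params.
have [rate_gt0 rate_lt _] := rate_facts.
have [up_ge1 up_le] := up_factor_facts.
rewrite ltr_pdivlMr; last lra.
have : 0 < up_factor * (p * (p + m) - rate * sigma) by apply: mulr_gt0; nra.
nra.
Qed.

(* The one-step drift of the walk is [sigma - p < 0], so [exp (rate * h)]
   contracts on average for small [rate]. *)
Lemma drift_contraction : p * down_factor + (1 - p) * up_factor < 1.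
Proof.
params.
have [rate_gt0 rate_lt rate_lt'] := rate_facts.
have [up_ge1 up_le] := up_factor_facts.
have down_le := down_factor_facts.
have down_gt0 : 0 < down_factor by apply: expR_gt0.
set x := rate * sigma in up_le *; set z := rate * (1 - sigma) in down_le *.
have x_lt1 : x < 1 by rewrite /x; nra.
have z_gt0 : 0 < z by rewrite /z; apply: mulr_gt0; lra.
have key : p * (1 - x) + (1 - p) * (1 + z) < (1 + z) * (1 - x).
  have : rate * sigma * (1 - sigma) < p - sigma by nra.
  rewrite /x /z; nra.
have pos : 0 < (1 + z) * (1 - x) by apply: mulr_gt0; lra.
rewrite -(ltr_pM2r pos) mul1r.
have : 0 <= p * (1 - x) * (1 - down_factor * (1 + z)) by apply: mulr_ge0; nra.
have : 0 <= (1 - p) * (1 + z) * (1 - up_factor * (1 - x)) by apply: mulr_ge0; nra.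
nra.
Qed.

Lemma base_level_facts : [/\ 0 < base_level, base_level <= 1,
  (1 - p - m) * up_factor < base_level & p * base_level + (1 - p) * up_factor < 1].
Proof.
params.
have gap := zero_gap.
have [up_ge1 _] := up_factor_facts.
have top_le1 : (1 - (1 - p) * up_factor) / p <= 1 by rewrite ler_pdivrMr ?mul1r; nra.
have top_eq : p * ((1 - (1 - p) * up_factor) / p) = 1 - (1 - p) * up_factor.
  by rewrite mulrCA mulfV ?mulr1 // gt_eqF //; lra.
have : 0 <= (1 - p - m) * up_factor by apply: mulr_ge0; lra.
rewrite /base_level; split; nra.
Qed.

Lemma contraction_facts : 0 < contraction < 1.
Proof.
params.
have [base_gt0 _ gap base_lt] := base_level_facts.
have drift := drift_contraction.
have [up_ge1 _] := up_factor_facts.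
apply/andP; split.
  rewrite !lt_max; apply/orP; right; apply/orP; right.
  have : 0 < p * down_factor by apply: mulr_gt0; [lra | apply: expR_gt0].
  nra.
by rewrite !gt_max ltr_pdivrMr ?mul1r ?gap ?base_lt.
Qed.

Lemma level_ge_base h : base_level <= level h.
Proof.
params.
have [rate_gt0 _ _] := rate_facts; have [_ base_le1 _ _] := base_level_facts.
rewrite /level; case: ifPn => //; rewrite -ltNge => h_gt0.
have := expR_ge1Dx (rate * h); have : 0 < rate * h by apply: mulr_gt0.
lra.
Qed.

Lemma level_drift_zero : (1 - p - m) * level sigma <= contraction * level 0.
Proof.
params.
have [base_gt0 _ _ _] := base_level_facts.
rewrite /level lexx ifF; last by apply/negbTE; rewrite -ltNge.
by rewrite -ler_pdivrMr // /contraction le_max lexx.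
Qed.

Lemma level_drift_pos h : 0 < h ->
  (1 - p) * level (h + sigma) + p * level (walk_step sigma h (Some Plus))
  <= contraction * level h.
Proof.
params.
move=> h_gt0; have [rate_gt0 _ _] := rate_facts.
have [base_gt0 _ _ _] := base_level_facts.
have e_ge1 : 1 <= expR (rate * h).
  have : 0 < rate * h by apply: mulr_gt0.
  have := expR_ge1Dx (rate * h); lra.
have level_pos x : 0 < x -> level x = expR (rate * x).
  by move=> x_gt0; rewrite /level ifF //; apply/negbTE; rewrite -ltNge.
have -> : walk_step sigma h (Some Plus) = Num.max (h - (1 - sigma)) 0 by [].
rewrite (level_pos h) // (level_pos (h + sigma)) ?addr_gt0 // mulrDr expRD -/up_factor.
have [low|high] := lerP (h - (1 - sigma)) 0.
- rewrite /level lexx.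
  have : p * base_level + (1 - p) * up_factor <= contraction.
    by rewrite /contraction !le_max lexx orbT.
  have : 0 <= p * base_level by apply: mulr_ge0; lra.
  have : 0 <= up_factor by apply: ltW; apply: expR_gt0.
  nra.
- rewrite level_pos //.
  have -> : expR (rate * (h - (1 - sigma))) = expR (rate * h) * down_factor.
    by rewrite -expRD /down_factor; congr expR; ring.
  have : p * down_factor + (1 - p) * up_factor <= contraction.
    by rewrite /contraction !le_max lexx !orbT.
  nra.
Qed.

Lemma potential_step y :
  \sum_(c <- letters) potential (rcons y c) <= contraction * potential y.
Proof.
rewrite !big_cons big_nil addr0 /potential !coalesced_rcons !height_rcons.
have w_ge0 := word_weight_ge0 y; have h_ge0 := height_ge0 (ltW sigma_gt0) y.
case: (coalesced sigma y) => /=; first by rewrite !addr0 mulr0.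
rewrite !word_weight_rcons [leRHS]mulrCA.
have [-> | h_neq0] := eqVneq (height sigma y) 0; rewrite /=.
- rewrite !add0r !addr0 -mulrA; apply: ler_wpM2l => //; exact: level_drift_zero.
- rewrite -!mulrA -!mulrDr; apply: ler_wpM2l => //.
  have := @level_drift_pos (height sigma y); rewrite lt_def h_neq0 h_ge0 => /(_ isT).
  lra.
Qed.

Lemma sum_potential n : \sum_(y <- words n) potential y <= contraction ^+ n * base_level.
Proof.
have /andP [rho_gt0 _] := contraction_facts.
elim: n => [|n IH].
  by rewrite big_seq1 expr0 mul1r /potential /= /word_weight big_nil mul1r /level lexx.
rewrite big_allpairs_dep; apply: le_trans (ler_sum _ (fun y _ => potential_step y)) _.
by rewrite -mulr_sumr exprS -mulrA ler_wpM2l // ltW.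
Qed.

Lemma sum_weight_uncoalesced n :
  \sum_(y <- words n | ~~ coalesced sigma y) word_weight y <= contraction ^+ n.
Proof.
have [base_gt0 _ _ _] := base_level_facts.
rewrite -(ler_pM2r base_gt0); apply: le_trans (sum_potential n).
rewrite mulr_suml big_mkcond; apply: ler_sum => y _; rewrite /potential.
case: (coalesced sigma y) => /=; first by rewrite ?mul0r.
by apply: ler_wpM2l; [exact: word_weight_ge0 | exact: level_ge_base].
Qed.

End Potential.

Section Kernel.
Variables (R : realType) (P : sgn -> past -> R).
Hypothesis P_kernel : is_kernel P.

Lemma kernel_ge0 a z : 0 <= P a z.
Proof. by case: P_kernel => bounds _; case/andP: (bounds a z). Qed.

Lemma inf_range_ge0 (F : past -> R) : (forall z, 0 <= F z) -> 0 <= inf (range F).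
Proof.
move=> F_ge0; apply: lb_le_inf; first by exists (F (fun=> Plus)), (fun=> Plus).
by move=> _ [z _ <-].
Qed.

Lemma alpha_ge0 a : 0 <= alpha P a.
Proof. exact: inf_range_ge0 (kernel_ge0 a). Qed.

Lemma alpha_le a z : alpha P a <= P a z.
Proof. by apply: ge_inf; [exists 0 => _ [z' _ <-]; exact: kernel_ge0 | exists z]. Qed.

Lemma alpha_m1_le1 : alpha_m1 P <= 1.
Proof.
case: P_kernel => _ sum1; rewrite /alpha_m1 -(sum1 (fun=> Plus)).
by apply: lerD; exact: alpha_le.
Qed.

Lemma alpha_Plus_Minus_le1 : alpha P Plus + alpha P Minus <= 1.
Proof. by rewrite addrC; exact: alpha_m1_le1. Qed.

Lemma pskel_ge0 a v : 0 <= pskel P a v.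
Proof. by case: v => [w|b] /=; [apply: inf_range_ge0 => z |]; exact: kernel_ge0. Qed.

End Kernel.

Section ContextLength.
Variables (R : realType) (sigma : R).

Definition frequency_reached (b : past) (k : nat) : Prop :=
  (0 < k)%N /\ sigma <= (\sum_(i < k) ind_plus R (b i)) / k%:R.

Lemma Tsig_leP b K :
  (Tsig sigma b <= (K%:R)%:E)%E <-> exists2 k, (k <= K)%N & frequency_reached b k.
Proof.
split; last first.
  move=> [k kK bk]; apply: le_trans (_ : (k%:R)%:E <= _)%E.
    by apply: ereal_inf_lbound; exists k.
  by rewrite lee_fin ler_nat.
move=> bK; apply: contrapT => no_k; move: bK; apply/negP; rewrite -ltNge.
apply: lt_le_trans (_ : (K.+1%:R)%:E <= _)%E; first by rewrite lte_fin ltr_nat.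
apply: le_ereal_inf_tmp => _ [k bk <-]; rewrite lee_fin ler_nat ltnNge.
by apply/negP => kK; apply: no_k; exists k.
Qed.

Lemma Tsig_cases b : Tsig sigma b = +oo%E \/
  exists2 k, frequency_reached b k & Tsig sigma b = (k%:R)%:E.
Proof.
case: (pselect (exists k, frequency_reached b k)) => [[k bk]|none]; last first.
  left; apply/eqP; rewrite eq_le leey /=; apply: le_ereal_inf_tmp => _ [k bk <-].
  by exfalso; apply: none; exists k.
right; have ex : exists k, `[< frequency_reached b k >] by exists k; apply/asboolP.
case: (ex_minnP ex) => k0 /asboolP bk0 k0_min; exists k0 => //.
apply/le_anti/andP; split; first by apply: ereal_inf_lbound; exists k0.
apply: le_ereal_inf_tmp => _ [k' bk' <-].
by rewrite lee_fin ler_nat; apply: k0_min; apply/asboolP.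
Qed.

Lemma Tsig_le_mono b b' K :
  (forall i, (i < K)%N -> ind_plus R (b i) <= ind_plus R (b' i)) ->
  (Tsig sigma b <= (K%:R)%:E)%E -> (Tsig sigma b' <= (K%:R)%:E)%E.
Proof.
move=> bb' /Tsig_leP [k kK [k_gt0 bk]]; apply/Tsig_leP; exists k => //; split => //.
apply: le_trans bk _; apply: ler_wpM2r; first by rewrite invr_ge0 ler0n.
by apply: ler_sum => i _; apply: bb'; exact: leq_trans (ltn_ord i) kK.
Qed.

Lemma cat_past_mkseq (b : past) k : cat_past (fun i => b (i + k)%N) (mkseq b k) = b.
Proof.
apply: funext => i; rewrite /cat_past size_mkseq.
by case: ltnP => ik; [rewrite nth_mkseq | rewrite subnK].
Qed.

Lemma inf_pskel_le_alpha (P : sgn -> past -> R) a : is_kernel P ->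
  inf [set pskel P a v | v in in_tau sigma] <= alpha P a.
Proof.
move=> P_kernel; apply: lb_le_inf; first by exists (P a (fun=> Plus)), (fun=> Plus).
move=> _ [b _ <-].
have lb : has_lbound [set pskel P a v | v in in_tau sigma].
  by exists 0 => _ [v _ <-]; exact: pskel_ge0.
have [Tb_inf|[k _ Tb]] := Tsig_cases b; first by apply: ge_inf => //; exists (Inf b).
apply: le_trans (_ : pskel P a (Fin (mkseq b k)) <= _).
  by apply: ge_inf => //; exists (Fin (mkseq b k)) => //; exists b; rewrite size_mkseq.
apply: ge_inf; first by exists 0 => _ [z _ <-]; exact: kernel_ge0.
by exists (fun i => b (i + k)%N) => //; rewrite cat_past_mkseq.
Qed.

End ContextLength.

Lemma measure_big_setU_le d (T : measurableType d) (R : realType)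
    (mu : {measure set T -> \bar R}) (I : Type) (s : seq I) (P : pred I) (F : I -> set T) :
  (forall i, measurable (F i)) ->
  (mu (\big[setU/set0]_(i <- s | P i) F i) <= \sum_(i <- s | P i) mu (F i))%E.
Proof.
move=> mF; elim: s => [|i s IH]; first by rewrite !big_nil measure0.
rewrite !big_cons; case: (P i) => //.
apply: le_trans (measureU2 _ _ _) _; [exact: mF | exact: bigsetU_measurable | exact: leeD].
Qed.

Lemma lebesgue_measure_unit_trace (R : realType) (B : set R) (lo hi : R) :
  0 <= lo -> lo <= hi -> hi <= 1 ->
  (forall x, 0 <= x < 1 -> B x <-> lo <= x < hi) ->
  lebesgue_measure (B `&` `[0%R, 1%R[) = (hi - lo)%:E.
Proof.
move=> lo_ge0 lo_le_hi hi_le1 B_trace.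
have -> : B `&` `[0%R, 1%R[ = [set` `[lo, hi[].
  apply/seteqP; split => x /=; rewrite !in_itv /=.
    by move=> [Bx x01]; apply/(B_trace x x01).
  move=> xlh; have x01 : 0 <= x < 1 by lra.
  by split; [apply/(B_trace x x01) | rewrite x01].
rewrite lebesgue_measure_itv /= lte_fin; case: ltP => [_|hl]; first by rewrite -EFinD.
have -> : hi = lo by apply/le_anti; rewrite hl lo_le_hi.
by rewrite subrr.
Qed.

Lemma neq_other (s t : sgn) : s != t -> s = other t.
Proof. by case: s; case: t. Qed.

Section Sampling.
Variables (R : realType) (d : measure_display) (Omega : measurableType d).
Variables (Pr : probability Omega R) (U : int -> Omega -> R) (a1 : sgn).
Variable P : sgn -> past -> R.
Hypotheses (U_iid : iid_uniform Pr U) (P_kernel : is_kernel P).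

Definition Yword (n : nat) (w : Omega) : seq (option sgn) :=
  [seq Yv P a1 U (- k%:Z) w | k <- iota 0 n].

Lemma size_Yword n w : size (Yword n w) = n.
Proof. by rewrite size_map size_iota. Qed.

Lemma nth_Yword n w k : (k < n)%N -> nth None (Yword n w) k = Yv P a1 U (- k%:Z) w.
Proof. by move=> kn; rewrite (nth_map 0%N) ?size_iota // nth_iota. Qed.

Definition Yinterval (c : option sgn) : interval R :=
  match c with
  | Some s => if s == a1 then `]-oo, alpha P a1[ else `[alpha P a1, alpha_m1 P[
  | None => `[alpha_m1 P, +oo[
  end.

Lemma alpha_a1_bounds : [/\ 0 <= alpha P a1, alpha P a1 <= alpha_m1 P & alpha_m1 P <= 1].
Proof.
have := alpha_ge0 P_kernel Minus; have := alpha_ge0 P_kernel Plus.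
have := alpha_m1_le1 P_kernel; rewrite /alpha_m1.
by case: a1 => *; split; lra.
Qed.

Lemma Yv_eq_itv i c w : Yv P a1 U i w = c <-> U i w \in Yinterval c.
Proof.
have [_ a1_le _] := alpha_a1_bounds.
rewrite /Yv /Yinterval; set u := U i w.
case: c => [s|]; [case: (eqVneq s a1) => [->|/neq_other ->] |];
  rewrite /= ?eqxx ?in_itv /=; have [u1|u1] := ltP u (alpha P a1);
  have [u2|u2] := ltP u (alpha_m1 P) => /=; try by [exfalso; lra].
all: by split => //; case: a1.
Qed.

Lemma measurable_Yinterval i c : measurable (U i @^-1` [set` Yinterval c]).
Proof. by rewrite -[X in measurable X]setTI; apply: (U_iid.1 i) => //; exact: measurable_itv. Qed.

Lemma Pr_Yinterval i c :
  Pr (U i @^-1` [set` Yinterval c]) = (letter_weight (alpha P Plus) (alpha P Minus) c)%:E.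
Proof.
have [a1_ge0 a1_le am_le1] := alpha_a1_bounds.
have a1_le1 := le_trans a1_le am_le1; have am_ge0 := le_trans a1_ge0 a1_le.
rewrite (U_iid.2.1 i _ (measurable_itv _)).
case: c => [s|]; [case: (eqVneq s a1) => [->|/neq_other ->] |]; rewrite /Yinterval ?eqxx.
- have trace x : 0 <= x < 1 -> (x \in `]-oo, alpha P a1[) <-> 0 <= x < alpha P a1.
    by case/andP => x0 _; rewrite in_itv /= x0.
  rewrite (lebesgue_measure_unit_trace (lexx 0) a1_ge0 a1_le1 trace).
  by case: a1 {a1_ge0 a1_le am_le1 a1_le1 am_ge0 trace} => /=; rewrite subr0.
- rewrite ifN; last by case: a1 {a1_ge0 a1_le am_le1 a1_le1 am_ge0}.
  have trace x : 0 <= x < 1 ->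
      (x \in `[alpha P a1, alpha_m1 P[) <-> alpha P a1 <= x < alpha_m1 P.
    by rewrite in_itv.
  rewrite (lebesgue_measure_unit_trace a1_ge0 a1_le am_le1 trace).
  congr EFin; rewrite /alpha_m1.
  by case: a1 {a1_ge0 a1_le am_le1 a1_le1 am_ge0 trace} => /=; ring.
- have trace x : 0 <= x < 1 -> (x \in `[alpha_m1 P, +oo[) <-> alpha_m1 P <= x < 1.
    by case/andP => _ x1; rewrite in_itv /= x1 andbT.
  rewrite (lebesgue_measure_unit_trace am_ge0 am_le1 (lexx 1) trace).
  by congr EFin; rewrite /alpha_m1 /=; ring.
Qed.

Lemma Yword_eq_cylinder y :
  [set w | Yword (size y) w = y] =
  \big[setI/setT]_(i <- [seq - k%:Z | k <- iota 0 (size y)])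
    (U i @^-1` [set` Yinterval (nth None y `|i|%N)]).
Proof.
rewrite -bigcap_seq; apply/seteqP; split => w /=.
  move=> Yw i /mapP [k]; rewrite mem_iota => /andP [_ ky] ->.
  by rewrite /preimage /= abszN absz_nat -Yw nth_Yword //; exact/Yv_eq_itv.
move=> Yw; apply: (@eq_from_nth _ None); rewrite ?size_Yword // => k ky.
rewrite nth_Yword //; apply/Yv_eq_itv.
have := Yw (- k%:Z); rewrite /preimage /= abszN absz_nat; apply.
by apply/mapP; exists k; rewrite // mem_iota add0n ky.
Qed.

Lemma Pr_Yword_eq y :
  Pr [set w | Yword (size y) w = y] = (word_weight (alpha P Plus) (alpha P Minus) y)%:E.
Proof.
have uniq_idx : uniq [seq - k%:Z | k <- iota 0 (size y)].
  by rewrite map_inj_uniq ?iota_uniq // => k1 k2 /eqP; rewrite eqr_opp => /eqP [].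
rewrite Yword_eq_cylinder (U_iid.2.2 _ _ uniq_idx) => [|i]; last exact: measurable_itv.
rewrite big_map; under eq_bigr => k _ do rewrite abszN absz_nat Pr_Yinterval.
by rewrite prodEFin /word_weight (big_nth None) /index_iota subn0.
Qed.

Lemma measurable_Yword_eq n y : measurable [set w | Yword n w = y].
Proof.
have [<-|ny] := eqVneq (size y) n.
  by rewrite Yword_eq_cylinder; apply: bigsetI_measurable => i _; exact: measurable_Yinterval.
rewrite (_ : [set w | _] = set0) //; apply/seteqP; split => // w /= Yw.
by move: ny; rewrite -Yw size_Yword eqxx.
Qed.

Lemma Yword_preimage n (g : pred (seq (option sgn))) :
  [set w | g (Yword n w)] = \big[setU/set0]_(y <- words n | g y) [set w | Yword n w = y].
Proof.
rewrite -bigcup_seq_cond; apply/seteqP; split => w /=; last by move=> [y /andP [_ gy] ->].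
move=> gw; exists (Yword n w) => //; apply/andP; split => //.
by rewrite -{2}(size_Yword n w); exact: mem_words.
Qed.

Lemma measurable_Yword n (A : set (seq (option sgn))) : measurable [set w | A (Yword n w)].
Proof.
have -> : [set w | A (Yword n w)] = [set w | `[< A (Yword n w) >]].
  by apply/seteqP; split => w /=; [move=> ?; exact/asboolP | move/asboolP].
rewrite (Yword_preimage n (fun y => `[< A y >])).
by apply: bigsetU_measurable => y _; exact: measurable_Yword_eq.
Qed.

Lemma Pr_uncoalesced sigma n : 0 < sigma -> sigma < 1 -> sigma < alpha P Plus ->
  (Pr [set w | ~~ coalesced sigma (Yword n w)]
   <= ((contraction sigma (alpha P Plus) (alpha P Minus)) ^+ n)%:E)%E.
Proof.
move=> sigma_gt0 sigma_lt1 sigma_lt.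
rewrite (Yword_preimage n (fun y => ~~ coalesced sigma y)).
apply: le_trans (measure_big_setU_le Pr (words n) _ (measurable_Yword_eq n)) _.
rewrite big_seq_cond (eq_bigr (fun y => (word_weight (alpha P Plus) (alpha P Minus) y)%:E)).
  rewrite sumEFin lee_fin -big_seq_cond; apply: sum_weight_uncoalesced => //.
    exact: alpha_ge0.
  exact: alpha_Plus_Minus_le1.
by move=> y /andP [/size_words <- _]; exact: Pr_Yword_eq.
Qed.

End Sampling.

Section CoalescenceTime.
Variables (R : realType) (d : measure_display) (Omega : measurableType d).
Variables (Pr : probability Omega R) (U : int -> Omega -> R) (a1 : sgn).
Variables (P : sgn -> past -> R) (sigma : R).
Hypotheses (U_iid : iid_uniform Pr U) (P_kernel : is_kernel P) (sigma_ge0 : 0 <= sigma).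

Local Notation Y := (Yv P a1 U).
Local Notation theta0 := (theta P a1 U sigma 0).
Local Notation Yw := (Yword U a1 P).

Definition coalescence_time (i : int) (w : Omega) : Prop :=
  (i <= 0)%R /\ forall j : int, (i <= j)%R -> (j <= 0)%R ->
    Y j w <> None \/ (cn P a1 U sigma j w <= ((j - i)%:~R : R)%:E)%E.

Lemma cn_leP j w (K : nat) : (cn P a1 U sigma j w <= (K%:R)%:E)%E <->
  forall a, (Tsig sigma (pastY P a1 U j w a) <= (K%:R)%:E)%E.
Proof.
split => [cnK a|TK]; last by apply: ge_ereal_sup => _ [a _ <-].
by apply: le_trans cnK; apply: ereal_sup_ubound; exists a.
Qed.

Lemma plus_mass_le_Ya j w a : plus_mass R (Y j w) <= ind_plus R (Ya P a1 U j w a).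
Proof.
rewrite /Ya; case: (Y j w) => [[]|] /=; rewrite /ind_plus ?lexx ?ler01 //.
by case: (a j); rewrite ?lexx ?ler01.
Qed.

Lemma nonpos_int_ge_oppn (k : nat) (j : int) : (- k%:Z <= j)%R -> (j <= 0)%R ->
  exists2 t : nat, j = - t%:Z & (t <= k)%N.
Proof. by move=> kj j0; exists `|j|%N; lia. Qed.

(* A coalescence of the walk at step [k] makes [- k] a coalescence time: every
   final window of [Yword k] has plus-frequency at least [sigma], whatever
   values fill the undetermined positions. *)
Lemma coalescence_time_of_walk n w k : (k < n)%N ->
  coalesces_at sigma (Yw n w) k -> coalescence_time (- k%:Z) w.
Proof.
move=> kn /andP [/eqP h0 yk]; split; first by rewrite oppr_le0.
move=> j kj j0; have [t -> tk] := nonpos_int_ge_oppn kj j0.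
have [->|tk'] := eqVneq t k; first by left; apply/eqP; rewrite -(nth_Yword U a1 P w kn).
have {tk tk'} tk : (t < k)%N by rewrite ltn_neqAle tk' tk.
right; rewrite (_ : - t%:Z - - k%:Z = (k - t)%N%:Z); last by lia.
rewrite -pmulrn; apply/cn_leP => a; apply/Tsig_leP; exists (k - t)%N => //.
split; first by rewrite subn_gt0.
rewrite ler_pdivlMr ?ltr0n ?subn_gt0 //.
have size_k : size (take k (Yw n w)) = k by rewrite size_take size_Yword kn.
have := @height_window _ _ sigma_ge0 (take k (Yw n w)) t.
rewrite size_k h0 => /(_ (ltnW tk)); rewrite subr_le0 => /le_trans; apply.
rewrite -{1}(add0n t) big_addn big_mkord; apply: ler_sum => s _.
have st : (s + t < k)%N by have := ltn_ord s; lia.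
rewrite nth_take // nth_Yword; last exact: ltn_trans kn.
rewrite /pastY (_ : - t%:Z - s%:Z = - (s + t)%N%:Z); last by lia.
exact: plus_mass_le_Ya.
Qed.

Lemma theta_le0 w : (theta0 w <= 0)%E.
Proof. by apply: ge_ereal_sup => _ [i [i_le0 _] <-]; rewrite lee_fin lerz0. Qed.

Lemma theta_ge k w : coalescence_time (- k%:Z) w -> ((- k%:R : R)%:E <= theta0 w)%E.
Proof.
by move=> ck; apply: ereal_sup_ubound; exists (- k%:Z) => //; rewrite mulrNz -pmulrn.
Qed.

Lemma uncoalesced_of_large_theta n w :
  ((n%:R : R)%:E <= `|theta0 w|)%E -> ~~ coalesced sigma (Yw n w).
Proof.
move=> n_le; apply/hasPn => k; rewrite mem_iota size_Yword => /andP [_ kn].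
apply/negP => /(coalescence_time_of_walk kn)/theta_ge.
move: (theta_le0 w) n_le; case: (theta0 w) => [r| |] //=; rewrite !lee_fin.
move=> r_le0; rewrite ler0_norm // => n_le k_le.
have : (n%:R : R) <= k%:R by lra.
by rewrite ler_nat leqNgt kn.
Qed.

Lemma coalescence_time_Yword k w w' : Yw k.+1 w = Yw k.+1 w' ->
  coalescence_time (- k%:Z) w -> coalescence_time (- k%:Z) w'.
Proof.
move=> ww' [k_le0 ck]; split => // j kj j0.
have [t jt tk] := nonpos_int_ge_oppn kj j0.
have Yww' u : (u <= k)%N -> Y (- u%:Z) w = Y (- u%:Z) w'.
  move=> uk; have uk1 : (u < k.+1)%N by [].
  by rewrite -(nth_Yword U a1 P w uk1) -(nth_Yword U a1 P w' uk1) ww'.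
have := ck j kj j0; rewrite jt => -[Yj|cnj]; first by left; rewrite -Yww'.
right; move: cnj; rewrite (_ : - t%:Z - - k%:Z = (k - t)%N%:Z); last by lia.
rewrite -pmulrn => /cn_leP cnj; apply/cn_leP => a.
apply: Tsig_le_mono (cnj a) => i ikt; rewrite /pastY /Ya.
rewrite (_ : - t%:Z - i%:Z = - (t + i)%N%:Z); last by lia.
by rewrite Yww' ?lexx //; lia.
Qed.

Lemma measurable_coalescence_time k : measurable [set w | coalescence_time (- k%:Z) w].
Proof.
have -> : [set w | coalescence_time (- k%:Z) w] =
    [set w | exists2 w', Yw k.+1 w' = Yw k.+1 w & coalescence_time (- k%:Z) w'].
  apply/seteqP; split => w /=; first by exists w.
  by move=> [w' ww' ck]; exact: coalescence_time_Yword ww' ck.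
exact: (measurable_Yword a1 U_iid P_kernel k.+1
  (fun y => exists2 w', Yw k.+1 w' = y & coalescence_time (- k%:Z) w')).
Qed.

Definition coalescence_value (k : nat) (w : Omega) : \bar R :=
  if `[< coalescence_time (- k%:Z) w >] then (- k%:R : R)%:E else -oo%E.

Lemma theta_esups : (theta0 : Omega -> \bar R) = fun w => esups (coalescence_value ^~ w) 0.
Proof.
apply: funext => w; rewrite /esups /= /sdrop; apply/le_anti/andP; split.
  apply: ge_ereal_sup => _ [i [i_le0 ci] <-]; apply: ereal_sup_ubound; exists `|i|%N => //.
  have i_eq : i = - `|i|%N%:Z by lia.
  rewrite /coalescence_value asboolT; last by rewrite -i_eq; exact: (conj i_le0 ci).
  by rewrite [in RHS]i_eq mulrNz -pmulrn.
apply: ge_ereal_sup => _ [k _ <-]; rewrite /coalescence_value.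
by case: asboolP => [ck|_]; [exact: theta_ge | exact: leNye].
Qed.

Lemma measurable_coalescence_value k : measurable_fun setT (coalescence_value k).
Proof.
apply: measurable_fun_ifT; [|exact: measurable_cst|exact: measurable_cst].
apply: (measurable_fun_bool true); rewrite setTI.
rewrite (_ : _ @^-1` _ = [set w | coalescence_time (- k%:Z) w]).
  exact: measurable_coalescence_time.
by apply/seteqP; split => w /=; [move/asboolP | move=> ?; exact/asboolP].
Qed.

Lemma measurable_theta : measurable_fun setT (theta0 : Omega -> \bar R).
Proof.
rewrite theta_esups; apply: measurable_fun_esups => k.
exact: measurable_coalescence_value.
Qed.

End CoalescenceTime.

Lemma nneseries_geometric_le (R : realType) (r : R) : 0 <= r < 1 ->
  (\sum_(n <oo) (r ^+ n)%:E <= ((1 - r)^-1)%:E)%E.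
Proof.
move=> /andP [r_ge0 r_lt1].
have /ereal_nondecreasing_series/ereal_nondecreasing_cvgn/cvg_lim -> // :
  forall n, (0 <= n)%N -> true -> (0 <= (r ^+ n)%:E)%E.
  by move=> n _ _; rewrite lee_fin exprn_ge0.
apply: ge_ereal_sup => _ [n _ <-] /=; rewrite sumEFin lee_fin.
have r1_gt0 : 0 < 1 - r by lra.
rewrite -[(1 - r)^-1]mul1r ler_pdivlMr // mulrC.
have -> : (1 - r) * \sum_(0 <= i < n) r ^+ i = 1 - r ^+ n.
  elim: n => [|n IH]; first by rewrite big_geq // mulr0 expr0 subrr.
  by rewrite big_nat_recr //= mulrDr IH exprS; ring.
by have := exprn_ge0 n r_ge0; lra.
Qed.

Section GeometricTail.
Variables (d : measure_display) (T : measurableType d) (R : realType).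
Variable f : T -> \bar R.

Definition level_set (n : nat) : set T := [set x | ((n%:R : R)%:E <= f x)%E].

Lemma le_nneseries_indic_level x : (0 <= f x)%E ->
  (f x <= \sum_(n <oo) (\1_(level_set n) x : R)%:E)%E.
Proof.
move=> fx_ge0.
have indic_ge0 n : (0 <= (\1_(level_set n) x : R)%:E)%E.
  by rewrite lee_fin indicE; case: (_ \in _).
have count_ge N : ((N%:R : R)%:E <= f x)%E ->
    ((N.+1%:R : R)%:E <= \sum_(n <oo) (\1_(level_set n) x : R)%:E)%E.
  move=> fN; apply: le_trans (nneseries_lim_ge N.+1 (fun n _ _ => indic_ge0 n)).
  rewrite (eq_big_nat _ _ (F2 := fun=> 1%:E)); last first.
    move=> i /andP [_ iN]; rewrite indicE mem_set //.
    by apply: le_trans fN; rewrite lee_fin ler_nat -ltnS.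
  by rewrite sumEFin sumr_const_nat subn0 lee_fin.
have S_ge0 : (0 <= \sum_(n <oo) (\1_(level_set n) x : R)%:E)%E.
  by apply: nneseries_ge0 => n _ _.
move: fx_ge0 count_ge S_ge0; case: (f x) => [t| |] // t_ge0 count_ge.
  have /andP [t_ge t_lt] := truncn_itv t_ge0.
  by move=> _; apply: (le_trans _ (count_ge (Num.truncn t) _)); rewrite lee_fin // ltW.
case: (\sum_(n <oo) _)%E count_ge => [s| |] // count_ge; rewrite lee_fin => s_ge0.
have /andP [_ s_lt] := truncn_itv s_ge0.
by have := count_ge (Num.truncn s) (leey _); rewrite lee_fin leNgt s_lt.
Qed.

Hypothesis mf : measurable_fun setT f.

Lemma measurable_level_set n : measurable (level_set n).
Proof. by have := emeasurable_fun_c_infty measurableT mf ((n%:R)%:E); rewrite setTI. Qed.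

Hypothesis f_ge0 : forall x, (0 <= f x)%E.

Lemma integral_lt_pinfty_geometric_tail (mu : {measure set T -> \bar R}) (r : R) :
  0 <= r < 1 -> (forall n, (mu (level_set n) <= (r ^+ n)%:E)%E) ->
  (\int[mu]_x f x < +oo)%E.
Proof.
move=> r01 tail.
have m_indic n : measurable_fun setT (fun x => (\1_(level_set n) x : R)%:E).
  exact/measurable_EFinP/measurable_indic/measurable_level_set.
have indic_ge0 n x : (0 <= (\1_(level_set n) x : R)%:E)%E.
  by rewrite lee_fin indicE; case: (_ \in _).
apply: le_lt_trans (_ : _ <= \int[mu]_x \sum_(n <oo) (\1_(level_set n) x : R)%:E)%E _.
  apply: ge0_le_integral => //; first exact: (ge0_emeasurable_sum (P := predT)).
  by move=> x _; exact: le_nneseries_indic_level.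
rewrite integral_nneseries //; apply: (le_lt_trans _ (ltry ((1 - r)^-1))).
apply: (le_trans _ (nneseries_geometric_le r01)).
apply: lee_nneseries => [n _ _|n _]; first exact: integral_ge0.
by rewrite integral_indic ?setIT //; exact: measurable_level_set.
Qed.

End GeometricTail.

Theorem mainTheorem7 (R : realType) (d : measure_display) (Omega : measurableType d)
  (Pr : probability Omega R) (U : int -> Omega -> R) (a1 : sgn)
  (P : sgn -> past -> R) (sigma : R) :
  iid_uniform Pr U ->
  0 < sigma < 1 ->
  is_kernel P ->
  sigma < inf [set pskel P Plus v | v in in_tau sigma] ->
  (measurable_fun [set: Omega] (theta P a1 U sigma 0 : Omega -> \bar R) /\
   (\int[Pr]_w `|theta P a1 U sigma 0 w| < +oo)%E) /\
  (exists D dd : R, 0 < D /\ 0 < dd < 1 /\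
     forall n : nat,
       (Pr [set w | ((n%:R : R)%:E <= `|theta P a1 U sigma 0 w|)%E]
        <= (D * dd ^+ n)%:E)%E).
Proof.
move=> U_iid /andP [sigma_gt0 sigma_lt1] P_kernel sigma_lt_inf.
have sigma_lt := lt_le_trans sigma_lt_inf (inf_pskel_le_alpha sigma Plus P_kernel).
set rho := contraction sigma (alpha P Plus) (alpha P Minus).
have /andP [rho_gt0 rho_lt1] : 0 < rho < 1.
  exact: contraction_facts sigma_gt0 sigma_lt1 sigma_lt (alpha_ge0 P_kernel Minus)
    (alpha_Plus_Minus_le1 P_kernel).
have m_theta := measurable_theta a1 U_iid P_kernel (ltW sigma_gt0).
have m_abs_theta : measurable_fun setT (fun w => `|theta P a1 U sigma 0 w|%E).
  exact: measurableT_comp (@abse_measurable R setT) m_theta.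
have tail n : (Pr (level_set (fun w => `|theta P a1 U sigma 0 w|%E) n) <= (rho ^+ n)%:E)%E.
  apply: (le_trans _ (Pr_uncoalesced a1 U_iid P_kernel n sigma_gt0 sigma_lt1 sigma_lt)).
  apply: le_measure; rewrite ?inE.
  - exact: measurable_level_set m_abs_theta n.
  - exact: (measurable_Yword a1 U_iid P_kernel n (fun y => ~~ coalesced sigma y)).
  - by move=> w /=; apply: (uncoalesced_of_large_theta (ltW sigma_gt0)).
split; first split => //.
  apply: (@integral_lt_pinfty_geometric_tail _ _ _ _ m_abs_theta (fun=> abse_ge0 _) Pr rho)
    => //.
  by rewrite ltW.
exists 1, rho; split => //; split; first by rewrite rho_gt0 rho_lt1.
by move=> n; rewrite mul1r; exact: tail.
Qed.
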